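(* Consider $n$ birds in $\mathbb{R}^d$ evolving noise-free by $x(t)=x(t-1)+v(t)$, $v(t+1)=(P\otimes I_d)v(t)$ ($t\ge1$), where the flocking network is a fixed connected graph $G$ for all $t$ and $P=I_n-CL$ is the corresponding fixed transition matrix. Let $\pi=(\mathrm{tr}\,C^{-1})^{-1}C^{-1}\mathbf{1}$, let $\Gamma=\lim_{t\to\infty}\bigl(-\mathbf{1}\pi^Tt+\sum_{s=0}^{t-1}P^s\bigr)$, let $\mathbf{m}_\pi[x(t)]=(\pi^T\otimes I_d)x(t)$ (the mass center), and let $x^r(t)=x(t)-(\mathbf{1}\otimes I_d)\mathbf{m}_\pi[x(t)]$. Then $x^r(t)$ converges to $x^r=((I_n-\mathbf{1}\pi^T)\otimes I_d)x(0)+(\Gamma\otimes I_d)v(1)$, and the mass center $\mathbf{m}_\pi[x(t)]$ moves in $\mathbb{R}^d$ at constant speed in a fixed direction.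
   Context: $G$ is a connected undirected graph without self-loops on $n$ vertices with degrees $d_i$ and Laplacian $L$; $C=\mathrm{diag}(c_1,\dots,c_n)$ with positive rationals $c_i$ of $O(\log n)$ bits and $c_id_i<1$. $\mathbf{1}$ is the all-ones vector. *)

From HB Require Import structures.
From mathcomp Require Import all_boot all_order all_algebra.
From mathcomp Require Import all_classical all_reals all_analysis.
Set Implicit Arguments. Unset Strict Implicit. Unset Printing Implicit Defensive.
Import Order.TTheory GRing.Theory Num.Theory.
Local Open Scope ring_scope.

Definition simple_graph (n : nat) (e : rel 'I_n) : Prop :=
  symmetric e /\ irreflexive e.

Definition connected_graph (n : nat) (e : rel 'I_n) : Prop :=
  forall i j : 'I_n, connect e i j.

Definition deg (n : nat) (e : rel 'I_n) (i : 'I_n) : nat := #|[set j | e i j]|.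

Definition laplacian (R : nzRingType) (n : nat) (e : rel 'I_n) : 'M[R]_n :=
  \matrix_(i, j) (if i == j then (deg e i)%:R else - (e i j)%:R).

Definition Cmat (R : nzRingType) (n : nat) (c : 'I_n -> R) : 'M[R]_n :=
  diag_mx (\row_i c i).

Definition transP (R : nzRingType) (n : nat) (e : rel 'I_n) (c : 'I_n -> R)
  : 'M[R]_n := 1%:M - Cmat c *m laplacian R e.

Definition ones (R : nzRingType) (n : nat) : 'cV[R]_n := const_mx 1.

Definition piv (R : fieldType) (n : nat) (c : 'I_n -> R) : 'cV[R]_n :=
  (\tr (invmx (Cmat c)))^-1 *: (invmx (Cmat c) *m ones R n).

Definition Gamma_seq (R : fieldType) (n : nat) (e : rel 'I_n) (c : 'I_n -> R)
  (t : nat) : 'M[R]_n :=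
  - ((ones R n *m (piv c)^T) *+ t) + \sum_(s < t) (transP e c) ^+ s.

(* Positions / velocities of the n birds in R^d are stored as n x d matrices
   (row i = bird i); the Kronecker product (A \otimes I_d) acting on the
   stacked vector corresponds to left multiplication A *m X. *)

Definition mass_center (R : fieldType) (n d : nat) (c : 'I_n -> R)
  (X : 'M[R]_(n, d)) : 'rV[R]_d := (piv c)^T *m X.

Definition rel_pos (R : fieldType) (n d : nat) (c : 'I_n -> R)
  (X : 'M[R]_(n, d)) : 'M[R]_(n, d) := X - ones R n *m mass_center c X.

(* The transition matrix P = I - C L is row stochastic, with a positive
   diagonal and positive entries along the edges, so connectivity makes
   P^(n+1) entrywise positive, say with entries at least d.  Dobrushin's
   contraction then shrinks the spread of every column of P^s by a factor
   1 - d every n + 1 steps.  The weight vector pi is stationary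
   (pi^T P = pi^T, by the symmetry of L), so every entry of P^s - 1 pi^T is a
   deviation from a pi-average of a column of P^s and is bounded by its
   spread: P^s - 1 pi^T decays geometrically and Gamma converges absolutely.
   Unrolling the dynamics gives x(t) = x(0) + sum_(s < t) P^s v(1), hence
   x^r(t) = (I - 1 pi^T) x(0) + Gamma_t v(1), and pi^T P^s = pi^T makes the
   mass center advance by pi^T v(1) at every step. *)

From HB Require Import structures.
From mathcomp Require Import all_boot all_order all_algebra.
From mathcomp Require Import all_classical all_reals all_analysis.
From mathcomp Require Import lra.
Import Order.TTheory GRing.Theory Num.Theory.
Import numFieldNormedType.Exports.
Local Open Scope classical_set_scope.
Local Open Scope ring_scope.

Section StochasticMatrix.
Context {R : realFieldType} {n : nat}.

Definition stochastic_mx (A : 'M[R]_n) :=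
  (forall i j, 0 <= A i j) /\ (forall i, \sum_j A i j = 1).

Definition col_spread_le {m} (U : 'M[R]_(n, m)) (r : R) :=
  forall i j l, U i l - U j l <= r.

Lemma stochastic_mx1 : stochastic_mx 1%:M.
Proof.
split=> [i j|i]; first by rewrite mxE ler0n.
rewrite (bigD1 i) //= mxE eqxx big1 ?addr0 // => j /negbTE.
by rewrite mxE eq_sym => ->.
Qed.

Lemma stochastic_mxM A B :
  stochastic_mx A -> stochastic_mx B -> stochastic_mx (A *m B).
Proof.
move=> [A0 A1] [B0 B1]; split=> [i j|i].
  by rewrite mxE; apply: sumr_ge0 => k _; apply: mulr_ge0.
under eq_bigr do rewrite mxE.
by rewrite exchange_big /=; under eq_bigr do rewrite -mulr_sumr B1 mulr1.
Qed.

Lemma stochastic_mxX A k : stochastic_mx A -> stochastic_mx (A ^+ k).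
Proof.
move=> sA; elim: k => [|k IH]; first exact: stochastic_mx1.
by rewrite exprS -mulmxE; apply: stochastic_mxM.
Qed.

Lemma stochastic_mx_le1 A i j : stochastic_mx A -> A i j <= 1.
Proof.
move=> [A0 A1]; rewrite -(A1 i) (bigD1 j) //= lerDl.
by apply: sumr_ge0 => k _.
Qed.

Lemma col_spread_le_stochastic A : stochastic_mx A -> col_spread_le A 1.
Proof.
move=> sA i j l; rewrite lerBlDr -[leLHS]addr0 lerD ?stochastic_mx_le1 //.
by case: sA.
Qed.

(* Dobrushin's contraction: every row of [A *m U] is a convex combination of
   the rows of [U] giving weight at least [d] to a row minimizing column [l]. *)
Lemma col_spread_le_mulmx m A (U : 'M[R]_(n, m)) d r :
  stochastic_mx A -> (forall i k, d <= A i k) ->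
  col_spread_le U r -> col_spread_le (A *m U) ((1 - d) * r).
Proof.
move=> [A0 A1] Ad sU i j l.
have r0 : 0 <= r by have := sU i i l; rewrite subrr.
have [k0 _ min_k0] := @arg_minP _ R _ i xpredT (fun k => U k l) isT.
have row_bounds i' : U k0 l <= (A *m U) i' l <= U k0 l + (1 - d) * r.
  have -> : (A *m U) i' l = U k0 l + \sum_k A i' k * (U k l - U k0 l).
    rewrite mxE; under [in RHS]eq_bigr do rewrite mulrBr.
    by rewrite sumrB -mulr_suml A1 mul1r addrC subrK.
  rewrite lerDl lerD2l; apply/andP; split.
    by apply: sumr_ge0 => k _; rewrite mulr_ge0 // subr_ge0 min_k0.
  apply: (@le_trans _ _ (\sum_k (A i' k * r - (k == k0)%:R * (d * r)))).
    apply: ler_sum => k _; case: eqP => [->|_].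
      by rewrite subrr mulr0 mul1r subr_ge0 ler_wpM2r.
    by rewrite mul0r subr0 ler_wpM2l.
  rewrite sumrB -mulr_suml A1 mul1r (bigD1 k0) //= eqxx mul1r big1 ?addr0.
    by rewrite mulrBl mul1r.
  by move=> k /negbTE ->; rewrite mul0r.
have /andP[_ hi] := row_bounds i; have /andP[lo _] := row_bounds j.
lra.
Qed.

Lemma col_spread_le_exp A N d s :
  stochastic_mx A -> (forall i k, d <= (A ^+ N) i k) ->
  col_spread_le (A ^+ s) ((1 - d) ^+ (s %/ N)).
Proof.
move=> sA AN; rewrite {1}(divn_eq s N) exprD mulnC exprM.
elim: (s %/ N)%N => [|q IH].
  rewrite !expr0 mul1r.
  by apply: col_spread_le_stochastic; apply: stochastic_mxX.
rewrite !exprS -mulrA -mulmxE.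
by apply: col_spread_le_mulmx => //; apply: stochastic_mxX.
Qed.

Lemma convex_comb_dev_le (Q : 'M[R]_n) (p : 'I_n -> R) r i j :
  col_spread_le Q r -> (forall k, 0 <= p k) -> \sum_k p k = 1 ->
  `|Q i j - \sum_k p k * Q k j| <= r.
Proof.
move=> sQ p0 p1.
have -> : Q i j - \sum_k p k * Q k j = \sum_k p k * (Q i j - Q k j).
  under [RHS]eq_bigr do rewrite mulrBr.
  by rewrite sumrB -mulr_suml p1 mul1r.
apply: (le_trans (ler_norm_sum _ _ _)).
apply: (@le_trans _ _ (\sum_k p k * r)); last by rewrite -mulr_suml p1 mul1r.
apply: ler_sum => k _; rewrite normrM ger0_norm // ler_wpM2l //.
by rewrite ler_norml sQ andbT lerNl opprB sQ.
Qed.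

End StochasticMatrix.

Lemma mulmx_entry_gt0 (R : realFieldType) m p q (A : 'M[R]_(m, p))
    (B : 'M[R]_(p, q)) i k j :
  (forall i k, 0 <= A i k) -> (forall k j, 0 <= B k j) ->
  0 < A i k -> 0 < B k j -> 0 < (A *m B) i j.
Proof.
move=> A0 B0 Aik Bkj; rewrite mxE (bigD1 k) //=.
by rewrite ltr_wpDr ?mulr_gt0 // sumr_ge0 // => l _; apply: mulr_ge0.
Qed.

Section PositivePower.
Context {R : realFieldType} {n : nat} {e : rel 'I_n} {A : 'M[R]_n}.
Hypotheses (A_ge0 : forall i j, 0 <= A i j) (A_diag : forall i, 0 < A i i)
  (A_edge : forall i j, e i j -> 0 < A i j).

Lemma exp_mx_ge0 k i j : 0 <= (A ^+ k) i j.
Proof.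
elim: k i j => [|k IH] i j; first by rewrite expr0 mxE ler0n.
by rewrite exprS -mulmxE mxE; apply: sumr_ge0 => l _; apply: mulr_ge0.
Qed.

Lemma exp_mx_diag_gt0 k i : 0 < (A ^+ k) i i.
Proof.
elim: k => [|k IH]; first by rewrite expr0 mxE eqxx ltr01.
by rewrite exprS -mulmxE; apply: mulmx_entry_gt0 => //; apply: exp_mx_ge0.
Qed.

(* The positive diagonal lets a path of length [size p] be padded to any
   length [k >= size p]. *)
Lemma exp_mx_path_gt0 i p k : path e i p -> (size p <= k)%N ->
  0 < (A ^+ k) i (last i p).
Proof.
elim: p i k => [|y p IH] i k /=; first by move=> _ _; apply: exp_mx_diag_gt0.
case: k => [//|k] /andP[eiy py] Hk.
by rewrite exprS -mulmxE; apply: mulmx_entry_gt0 (IH _ _ py Hk) => //;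
  [apply: exp_mx_ge0 | apply: A_edge].
Qed.

Lemma exp_mx_connected_gt0 k i j : (forall i j, connect e i j) -> (n <= k)%N ->
  0 < (A ^+ k) i j.
Proof.
move=> conn nk; have /connectP [p pth ->] := conn i j.
have [p' pth' uniq_p' _] := shortenP pth.
apply: exp_mx_path_gt0 => //; apply: leq_trans nk.
have := max_card (mem (i :: p')).
by rewrite (card_uniqP uniq_p') card_ord => /ltnW.
Qed.

End PositivePower.

Lemma exists_lower_bound_lt1 {R : realFieldType} {T : finType} {f : T -> R} :
  (forall t, 0 < f t) -> exists d : R, [/\ 0 < d, d < 1 & forall t, d <= f t].
Proof.
move=> f_gt0; exists (\big[Num.min/2^-1]_t f t); split.
- elim/big_ind: _ => [|a b a0 b0|t _]; last exact: f_gt0.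
    by rewrite invr_gt0.
  by rewrite lt_min a0.
- by apply: le_lt_trans (bigmin_le_id _ _ _ _) _; rewrite invf_lt1 ?ltr1n.
- by move=> t; apply: bigmin_le.
Qed.

Lemma bernoulli_ineq (R : realFieldType) (x : R) k :
  0 <= x <= 1 -> 1 - x *+ k <= (1 - x) ^+ k.
Proof.
move=> /andP[x0 x1]; elim: k => [|k IH]; first by rewrite mulr0n subr0 expr0.
rewrite exprSr mulrSr.
have : (1 - x *+ k) * (1 - x) <= (1 - x) ^+ k * (1 - x).
  by rewrite ler_wpM2r // subr_ge0.
have : 0 <= x *+ k by rewrite mulrn_wge0.
nra.
Qed.

(* By Bernoulli, for [s = N q + r] with [r < N]:
   [(1 - d) ^+ q.+1 <= (1 - d / N) ^+ (N * q.+1) <= (1 - d / N) ^+ s]. *)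
Lemma expr_divn_le_geometric {R : realFieldType} {d : R} {N} s :
  0 < d < 1 -> (0 < N)%N ->
  (1 - d) ^+ (s %/ N) <= (1 - d)^-1 * (1 - d / N%:R) ^+ s.
Proof.
move=> /andP[d0 d1] N0.
have N0R : 0 < N%:R :> R by rewrite ltr0n.
have dN1 : d / N%:R <= 1.
  by rewrite ler_pdivrMr // mul1r (le_trans (ltW d1)) // ler1n.
have dN0 : 0 <= d / N%:R by rewrite divr_ge0 // ltW.
have d1' : 0 < 1 - d by rewrite subr_gt0.
have base : 1 - d <= (1 - d / N%:R) ^+ N.
  have := @bernoulli_ineq R (d / N%:R) N; rewrite dN0 dN1 => /(_ isT).
  by rewrite -mulrnAr -(mulr_natr N%:R^-1) mulVf ?mulr1 ?gt_eqF.
rewrite -(ler_pM2l d1') mulrA mulfV ?gt_eqF // mul1r -exprS.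
have q0 : 0 <= 1 - d / N%:R by rewrite subr_ge0.
apply: (le_trans (lerXn2r _ _ _ base));
  rewrite ?nnegrE ?exprn_ge0 ?(ltW d1') //.
rewrite -exprM ler_wiXn2l ?gerBl // mulnC.
exact/ltnW/ltn_ceil.
Qed.

Lemma ones_mulmx_entry (R : nzRingType) n (u : 'rV[R]_n) i j :
  (ones R n *m u) i j = u 0 j.
Proof. by rewrite mxE big_ord1 mxE mul1r. Qed.

Section FlockingMatrix.
Context {R : realFieldType} {n : nat} {e : rel 'I_n} {c : 'I_n -> R}.
Hypotheses (e_sym : symmetric e) (e_irr : irreflexive e).
Hypotheses (c_gt0 : forall i, 0 < c i)
  (cdeg_lt1 : forall i, c i * (deg e i)%:R < 1).

Local Notation L := (laplacian R e).
Local Notation P := (transP e c).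

Lemma laplacianE i j : L i j = (i == j)%:R * (deg e i)%:R - (e i j)%:R.
Proof.
rewrite mxE; case: eqP => [->|_]; first by rewrite e_irr mul1r subr0.
by rewrite mul0r sub0r.
Qed.

Lemma laplacian_sym i j : L i j = L j i.
Proof. by rewrite !mxE eq_sym e_sym; case: eqP => // ->. Qed.

Lemma laplacian_rowsum i : \sum_j L i j = 0.
Proof.
have deg_sum : \sum_j (e i j)%:R = (deg e i)%:R :> R.
  rewrite -natr_sum /deg -sum1dep_card [in RHS]big_mkcond /=.
  by congr (_%:R); apply: eq_bigr => j _; case: (e i j).
under eq_bigr do rewrite laplacianE.
rewrite sumrB deg_sum (bigD1 i) //= eqxx mul1r big1 ?addr0 ?subrr //.
by move=> j /negbTE; rewrite eq_sym => ->; rewrite mul0r.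
Qed.

Lemma transPE i j : P i j = (i == j)%:R - c i * L i j.
Proof. by rewrite /transP /Cmat mul_diag_mx !mxE. Qed.

Lemma transP_diag_gt0 i : 0 < P i i.
Proof. by rewrite transPE laplacianE eqxx e_irr mul1r subr0 subr_gt0. Qed.

Lemma transP_offdiag i j : i != j -> P i j = c i * (e i j)%:R.
Proof.
by move=> /negbTE ij; rewrite transPE laplacianE ij !mul0r !sub0r mulrN opprK.
Qed.

Lemma transP_edge_gt0 i j : e i j -> 0 < P i j.
Proof.
move=> eij; have ij : i != j by apply: contraTneq eij => ->; rewrite e_irr.
by rewrite transP_offdiag // eij mulr1.
Qed.

Lemma transP_stochastic : stochastic_mx P.
Proof.
split=> [i j|i].
  have [<-|ij] := eqVneq i j; first exact: ltW (transP_diag_gt0 i).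
  by rewrite transP_offdiag // mulr_ge0 // ltW.
under eq_bigr do rewrite transPE.
rewrite sumrB -mulr_sumr laplacian_rowsum mulr0 subr0 (bigD1 i) //= eqxx.
by rewrite big1 ?addr0 // => j /negbTE; rewrite eq_sym => ->.
Qed.

Lemma invmx_Cmat : invmx (Cmat c) = diag_mx (\row_i (c i)^-1).
Proof.
have CV : Cmat c *m diag_mx (\row_i (c i)^-1) = 1%:M.
  apply/matrixP => i j; rewrite /Cmat mulmx_diag !mxE.
  by case: eqP => [->|_]; rewrite ?mulfV ?gt_eqF ?mulr0n ?mulr0.
have [C_unit _] := mulmx1_unit CV.
by rewrite -[invmx _]mulmx1 -CV mulmxA mulVmx // mul1mx.
Qed.

Lemma pivE k : piv c k 0 = (\sum_l (c l)^-1)^-1 * (c k)^-1.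
Proof.
rewrite /piv invmx_Cmat mxtrace_diag mxE mul_diag_mx !mxE mulr1.
by under eq_bigr do rewrite mxE.
Qed.

Lemma piv_ge0 k : 0 <= piv c k 0.
Proof.
have cV_ge0 l : 0 <= (c l)^-1 by rewrite invr_ge0 ltW.
by rewrite pivE mulr_ge0 // invr_ge0 sumr_ge0.
Qed.

Lemma piv_sum1 (k0 : 'I_n) : \sum_k piv c k 0 = 1.
Proof.
under eq_bigr do rewrite pivE.
rewrite -mulr_sumr mulVf // (bigD1 k0) //= gt_eqF // ltr_wpDr ?invr_gt0 //.
by rewrite sumr_ge0 // => k _; rewrite invr_ge0 ltW.
Qed.

Lemma piv_stationary : (piv c)^T *m P = (piv c)^T.
Proof.
apply/rowP => j; rewrite mxE [RHS]mxE pivE.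
set T := (\sum_l (c l)^-1)^-1.
under eq_bigr => k _ do
  rewrite [_^T _ _]mxE transPE mulrBr pivE -/T mulrA
    (divfK (lt0r_neq0 (c_gt0 k))).
rewrite sumrB -mulr_sumr.
under [X in _ - T * X]eq_bigr do rewrite laplacian_sym.
rewrite laplacian_rowsum mulr0 subr0 (bigD1 j) //= eqxx mulr1 big1 ?addr0 //.
by move=> k /negbTE ->; rewrite mulr0.
Qed.

End FlockingMatrix.

Lemma cvg_mx_entries (K : realFieldType) (T : Type) (F : set_system T)
    (FF : Filter F) m p (f : T -> 'M[K]_(m, p)) (A : 'M[K]_(m, p)) :
  (forall i j, f t i j @[t --> F] --> A i j) -> f @ F --> A.
Proof.
move=> f_cvg; apply/cvgrPdist_le => /= eps eps_gt0; near=> t.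
rewrite /Num.Def.normr /= mx_normrE (bigmax_le _ (ltW eps_gt0)) //= => ij _.
rewrite !mxE /=.
move: ij; near: t; apply: filter_forall => ij.
exact: (cvgrPdist_le _ _).1 (f_cvg ij.1 ij.2) _ eps_gt0.
Unshelve. all: by end_near. Qed.

Lemma cvg_mulmxr (K : realFieldType) (T : Type) (F : set_system T)
    (FF : Filter F) m p q (f : T -> 'M[K]_(m, p)) (A : 'M[K]_(m, p))
    (B : 'M[K]_(p, q)) :
  f @ F --> A -> f t *m B @[t --> F] --> A *m B.
Proof.
move=> f_cvg; apply: cvg_mx_entries => i j; rewrite mxE.
under eq_cvg do rewrite mxE.
apply: cvg_big => [|k _]; first exact: add_continuous.
apply: cvgM; last exact: cvg_cst.
exact: continuous_cvg (@coord_continuous K m p i k _) f_cvg.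
Qed.

Lemma is_cvg_mx_entries (K : realFieldType) (T : Type) (F : set_system T)
    (FF : Filter F) m p (f : T -> 'M[K]_(m, p)) :
  (forall i j, cvg (f t i j @[t --> F])) -> cvg (f @ F).
Proof.
move=> f_cvg; apply/cvg_ex; exists (\matrix_(i, j) lim (f t i j @[t --> F])).
by apply: cvg_mx_entries => i j; rewrite mxE; apply: f_cvg.
Qed.

Section Flocking.
Context {R : realType} {n : nat} {e : rel 'I_n} {c : 'I_n -> R}.
Hypotheses (e_sym : symmetric e) (e_irr : irreflexive e).
Hypothesis e_conn : connected_graph e.
Hypotheses (c_gt0 : forall i, 0 < c i)
  (cdeg_lt1 : forall i, c i * (deg e i)%:R < 1).

Local Notation P := (transP e c).
Local Notation M := (ones R n *m (piv c)^T).

Lemma piv_stationaryX s : (piv c)^T *m P ^+ s = (piv c)^T.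
Proof.
elim: s => [|s IH]; first by rewrite expr0 mulmx1.
by rewrite exprSr -mulmxE mulmxA IH (piv_stationary e_sym e_irr c_gt0).
Qed.

Lemma Gamma_seqE : Gamma_seq e c = series (fun s => P ^+ s - M).
Proof.
apply/funext => t; rewrite /series /= big_mkord sumrB sumr_const card_ord.
by rewrite addrC.
Qed.

Lemma piv_stationaryX_entry s j :
  \sum_k piv c k 0 * (P ^+ s) k j = piv c j 0.
Proof.
have := congr1 (fun u : 'rV_n => u 0 j) (piv_stationaryX s).
rewrite !mxE => <-.
by under [RHS]eq_bigr do rewrite mxE.
Qed.

Lemma transPX_dev_geometric : exists C q : R,
  [/\ 0 <= C, 0 <= q < 1 & forall s i j, `|(P ^+ s - M) i j| <= C * q ^+ s].
Proof.
have sP := transP_stochastic e_irr c_gt0 cdeg_lt1.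
have [P_ge0 _] := sP.
have P_gt0 i j : 0 < (P ^+ n.+1) i j.
  exact: exp_mx_connected_gt0 P_ge0 (transP_diag_gt0 e_irr cdeg_lt1)
    (transP_edge_gt0 e_irr c_gt0) _ _ _ e_conn (leqnSn n).
have [d [d0 d1 Pd]] := exists_lower_bound_lt1
  (fun ij : 'I_n * 'I_n => P_gt0 ij.1 ij.2).
have dN1 : d / n.+1%:R < 1.
  by rewrite ltr_pdivrMr ?ltr0n // mul1r (lt_le_trans d1) // ler1n.
exists (1 - d)^-1, (1 - d / n.+1%:R); split.
- by rewrite invr_ge0 subr_ge0 ltW.
- by rewrite subr_ge0 ltW //= gtrBl divr_gt0 ?ltr0n.
move=> s i j.
rewrite 2!mxE ones_mulmx_entry mxE -(piv_stationaryX_entry s j).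
have d01 : 0 < d < 1 by rewrite d0.
apply: le_trans (expr_divn_le_geometric s d01 (ltn0Sn n)).
apply: convex_comb_dev_le; last exact: piv_sum1 c_gt0 i.
  by apply: col_spread_le_exp => // a b; apply: (Pd (a, b)).
exact: piv_ge0 c_gt0.
Qed.

Lemma Gamma_seq_cvg : cvgn (Gamma_seq e c).
Proof.
have [C [q [C0 /andP[q0 q1] dev_le]]] := transPX_dev_geometric.
apply: is_cvg_mx_entries => i j; rewrite Gamma_seqE.
under eq_fun do rewrite summxE.
apply: normed_cvg; apply: (series_le_cvg _ _ (fun s => dev_le s i j)).
- by move=> s; apply: normr_ge0.
- by move=> s; rewrite mulr_ge0 ?exprn_ge0.
- by apply: is_cvg_geometric_series; rewrite ger0_norm.
Qed.

Context {d : nat} {x v : nat -> 'M[R]_(n, d)}.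
Hypotheses (x_step : forall t, (1 <= t)%N -> x t = x t.-1 + v t)
  (v_step : forall t, (1 <= t)%N -> v t.+1 = P *m v t).

Lemma velocityE s : v s.+1 = P ^+ s *m v 1%N.
Proof.
elim: s => [|s IH]; first by rewrite expr0 mul1mx.
by rewrite v_step // IH mulmxA mulmxE -exprS.
Qed.

Lemma positionE t : x t = x 0%N + \sum_(s < t) P ^+ s *m v 1%N.
Proof.
elim: t => [|t IH]; first by rewrite big_ord0 addr0.
by rewrite x_step // IH big_ord_recr -velocityE addrA.
Qed.

Lemma rel_posE t :
  rel_pos c (x t) = (1%:M - M) *m x 0%N + Gamma_seq e c t *m v 1%N.
Proof.
have -> : rel_pos c (x t) = (1%:M - M) *m x t.
  by rewrite /rel_pos /mass_center mulmxA mulmxBl mul1mx.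
rewrite positionE mulmxDr mulmx_sumr Gamma_seqE /series /= big_mkord mulmx_suml.
congr (_ + _); apply: eq_bigr => s _.
by rewrite mulmxA mulmxBl mul1mx -mulmxA piv_stationaryX.
Qed.

Lemma mass_center_step t :
  mass_center c (x t.+1) = mass_center c (x t) + (piv c)^T *m v 1%N.
Proof.
by rewrite /mass_center x_step //= mulmxDr velocityE mulmxA piv_stationaryX.
Qed.

End Flocking.

(* The rationality of the weights [c i] only matters for the bit complexity
   considered in the paper; the dynamics converge for any positive weights. *)
Theorem lemma3p11 (R : realType) (n d : nat) (e : rel 'I_n) (c : 'I_n -> R)
  (x v : nat -> 'M[R]_(n, d)) :
  simple_graph e ->
  connected_graph e ->
  (forall i, exists q : rat, c i = ratr q) ->
  (forall i, 0 < c i) ->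
  (forall i, c i * (deg e i)%:R < 1) ->
  (forall t, (1 <= t)%N -> x t = x t.-1 + v t) ->
  (forall t, (1 <= t)%N -> v t.+1 = transP e c *m v t) ->
  exists Gamma : 'M[R]_n,
    [/\ (fun t => Gamma_seq e c t) @ \oo --> Gamma,
        (fun t => rel_pos c (x t)) @ \oo -->
          ((1%:M - ones R n *m (piv c)^T) *m x 0%N + Gamma *m v 1%N)
      & exists w : 'rV[R]_d, forall t,
          mass_center c (x t.+1) = mass_center c (x t) + w].
Proof.
move=> [e_sym e_irr] e_conn _ c_gt0 cdeg_lt1 x_step v_step.
have Gamma_cvg := Gamma_seq_cvg e_sym e_irr e_conn c_gt0 cdeg_lt1.
exists (limn (Gamma_seq e c)); split=> //.
- under eq_fun do rewrite (rel_posE e_sym e_irr c_gt0 x_step v_step).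
  by apply: cvgD; [apply: cvg_cst | apply: cvg_mulmxr].
- exists ((piv c)^T *m v 1%N) => t.
  exact: (mass_center_step e_sym e_irr c_gt0 x_step v_step t).
Qed.
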